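(* Fix $M\in\mathbb{N}$, $M\ge3$, and let $\lambda(j)=j\frac{4+j^2}{1+j^2}$. Call an $n$-uple $\{j_1,\dots,j_n\}\subset\mathbb{Z}\setminus\{0\}$, with $n\le M$, an $M$-resonance of order $n$ if $$\sum_{i=1}^nj_i=0,\qquad\sum_{i=1}^n\lambda(j_i)=0,\qquad\sum_{i=1}^n(1+j_i^2)^2j_i^{2(r-2)}\lambda(j_i)=0\quad\forall r=2,\dots,M+1.$$ Then all $M$-resonances are trivial: there are no $M$-resonances of odd order, and the ones of even order are, up to permutations, of the form $(i,-i,j,-j,k,-k,p,-p,\dots)$. *)

From mathcomp Require Import all_boot all_order all_algebra.
Set Implicit Arguments. Unset Strict Implicit. Unset Printing Implicit Defensive.
Import Order.TTheory GRing.Theory Num.Theory.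
Local Open Scope ring_scope.

Definition lam (j : int) : rat :=
  (j%:~R : rat) * (4 + (j%:~R) ^+ 2) / (1 + (j%:~R) ^+ 2).

(* An M-resonance of order n = size s: an n-uple (a sequence, repetitions
   allowed) of nonzero integers with n <= M satisfying the resonance relations. *)
Definition M_resonance (M : nat) (s : seq int) : Prop :=
  [/\ (size s <= M)%N,
      all (fun j => j != 0) s,
      \sum_(j <- s) j = 0,
      \sum_(j <- s) lam j = 0 &
      forall r : nat, (2 <= r <= M.+1)%N ->
        \sum_(j <- s) ((1 + (j%:~R : rat) ^+ 2) ^+ 2 * (j%:~R) ^+ (2 * (r - 2)) * lam j) = 0].

Definition trivial_resonance (s : seq int) : Prop :=
  exists t : seq int, perm_eq s (flatten [seq [:: x; - x] | x <- t]).

(** The conditions for r = 2, ..., M + 1 say that the weights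
    w(j) = (1 + j^2)^2 lambda(j) annihilate the moments (j^2)^k for k < M,
    hence every polynomial P of degree < M: sum_j w(j) P(j^2) = 0.  Choosing
    for P the product of (X - j^2) over the entries j whose square differs
    from x^2 isolates the fibre {x, -x}; as w is odd and nonzero on nonzero
    integers, x and -x occur equally often.  A sequence of nonzero integers
    with this symmetry is a permutation of (i, -i, j, -j, ...). *)

From mathcomp Require Import all_boot all_order all_algebra zify.
Set Implicit Arguments. Unset Strict Implicit. Unset Printing Implicit Defensive.
Import Order.TTheory GRing.Theory Num.Theory.
Local Open Scope ring_scope.

Section VanishingMoments.

Variables (R : idomainType) (T : eqType) (w u : T -> R) (s : seq T) (n : nat).
Hypothesis moments_eq0 : forall k, (k < n)%N -> \sum_(j <- s) w j * u j ^+ k = 0.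

Lemma sum_horner_eq0 (P : {poly R}) :
  (size P <= n)%N -> \sum_(j <- s) w j * P.[u j] = 0.
Proof.
move=> szP; under eq_bigr => j _ do rewrite horner_coef mulr_sumr.
rewrite exchange_big big1 // => k _ /=.
rewrite (eq_bigr (fun j => P`_k * (w j * u j ^+ k))) => [|j _]; last first.
  by rewrite mulrCA.
by rewrite -mulr_sumr moments_eq0 ?mulr0 // (leq_trans (ltn_ord k) szP).
Qed.

Hypothesis size_s : (size s <= n)%N.

Lemma sum_fiber_eq0 (a : R) : \sum_(j <- s | u j == a) w j = 0.
Proof.
have [a_in | a_notin] := boolP (has (fun j => u j == a) s); last first.
  exact: big_hasC.
pose P := \prod_(b <- [seq u j | j <- s & u j != a]) ('X - b%:P).
have P_root j : j \in s -> u j != a -> P.[u j] = 0.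
  by move=> js uj; apply/rootP; rewrite root_prod_XsubC map_f // mem_filter uj.
have Pa : P.[a] != 0.
  rewrite -/(root P a) root_prod_XsubC; apply/mapP => -[j].
  by rewrite mem_filter => /andP[/negP uj _] aj; apply: uj; rewrite aj.
have szP : (size P <= n)%N.
  rewrite size_prod_XsubC size_map size_filter.
  have -> : count (fun j => u j != a) s = (size s - count (fun j => u j == a) s)%N.
    by rewrite -(count_predC (fun j => u j == a)) addKn.
  by have := count_size (fun j => u j == a) s; rewrite has_count in a_in; lia.
have := sum_horner_eq0 szP; rewrite (bigID (fun j => u j == a)) /=.
rewrite [X in _ + X]big1_seq ?addr0 => [|j /andP[uj js]]; last by rewrite P_root ?mulr0.
under eq_bigr => j /eqP-> do []; rewrite -mulr_suml => /eqP.
by rewrite mulf_eq0 (negbTE Pa) orbF => /eqP.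
Qed.

End VanishingMoments.

Lemma sum_pred1_seq (V : nmodType) (T : eqType) (s : seq T) (F : T -> V) x :
  \sum_(j <- s | j == x) F j = F x *+ count_mem x s.
Proof.
rewrite (eq_bigr (fun=> F x)) => [|j /eqP-> //].
by rewrite big_const_seq iter_addr_0.
Qed.

Lemma count_mem_filter (T : eqType) (p : pred T) (s : seq T) x :
  count_mem x [seq y <- s | p y] = if p x then count_mem x s else 0%N.
Proof.
rewrite count_filter; case: ifP => px; last rewrite -(count_pred0 s).
all: by apply: eq_count => y /=; case: eqVneq => [->|]; rewrite ?px.
Qed.

Definition opp_pairs (V : zmodType) (t : seq V) : seq V :=
  flatten [seq [:: y; - y] | y <- t].

Lemma size_opp_pairs (V : zmodType) (t : seq V) : size (opp_pairs t) = (size t).*2.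
Proof. by elim: t => //= y t IH; rewrite IH doubleS. Qed.

Lemma count_mem_opp_pairs (V : zmodType) (t : seq V) z :
  count_mem z (opp_pairs t) = (count_mem z t + count_mem (- z) t)%N.
Proof.
by elim: t => //= y t IH; rewrite IH eqr_oppLR !addnA (addnAC _ (y == - z)).
Qed.

Lemma perm_eq_opp_pairs (R : realDomainType) (s : seq R) :
  all (fun y => y != 0) s -> (forall x, count_mem x s = count_mem (- x) s) ->
  perm_eq s (opp_pairs [seq y <- s | 0 < y]).
Proof.
move=> nz_s sym; apply/allP => z _; apply/eqP.
rewrite count_mem_opp_pairs !count_mem_filter oppr_gt0.
have [z_lt0|z_gt0|->] := ltgtP z 0.
- by rewrite sym.
- by rewrite addn0.
rewrite ?ltxx; apply/count_memPn/negP => s0.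
by have := allP nz_s 0 s0; rewrite eqxx.
Qed.

Definition lam_weight (j : int) : rat := (1 + (j%:~R : rat) ^+ 2) ^+ 2 * lam j.

Lemma lam_weightN j : lam_weight (- j) = - lam_weight j.
Proof. by rewrite /lam_weight /lam rmorphN /= sqrrN !mulNr mulrN. Qed.

Lemma lam_weight_neq0 j : j != 0 -> lam_weight j != 0.
Proof.
move=> j0; rewrite /lam_weight /lam !mulf_neq0 ?expf_neq0 ?invr_neq0 ?intr_eq0 //.
all: by rewrite gt_eqF // ltr_pwDl // sqr_ge0.
Qed.

Lemma resonance_moments_eq0 (M : nat) (s : seq int) :
  (forall r : nat, (2 <= r <= M.+1)%N ->
     \sum_(j <- s) ((1 + (j%:~R : rat) ^+ 2) ^+ 2 * (j%:~R) ^+ (2 * (r - 2)) * lam j) = 0) ->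
  forall k, (k < M)%N -> \sum_(j <- s) lam_weight j * ((j%:~R : rat) ^+ 2) ^+ k = 0.
Proof.
move=> moments k ltkM; rewrite -[RHS](moments k.+2) /=; last by rewrite ltnS.
by apply: eq_bigr => j _; rewrite /lam_weight !subSS subn0 exprM mulrAC.
Qed.

Lemma count_mem_opp_lam_weight (s : seq int) x : x != 0 ->
  \sum_(j <- s | (j%:~R : rat) ^+ 2 == (x%:~R) ^+ 2) lam_weight j = 0 ->
  count_mem x s = count_mem (- x) s.
Proof.
move=> x0; have xNx : (x == - x) = false.
  by rewrite -addr_eq0 -mulr2n mulrn_eq0 (negbTE x0).
rewrite (eq_bigl (fun j => (j == x) || (j == - x))) => [|j]; last first.
  by rewrite eqf_sqr -rmorphN !eqr_int.
rewrite (bigID (pred1 x)) /= (eq_bigl (pred1 x)) => [|j]; last first.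
  by rewrite /=; case: (eqVneq j x) => [->|]; rewrite ?andbT ?andbF.
rewrite [X in _ + X](eq_bigl (pred1 (- x))) => [|j]; last first.
  by rewrite /=; case: (eqVneq j x) => [->|]; rewrite ?xNx ?andbT ?andbF.
rewrite !sum_pred1_seq lam_weightN mulNrn => /eqP.
rewrite subr_eq0 -!(mulr_natr (lam_weight x)) => /eqP/(mulfI (lam_weight_neq0 x0))/eqP.
by rewrite eqr_nat => /eqP.
Qed.

Theorem proposition3p2 (M : nat) (hM : (3 <= M)%N) (s : seq int) :
  M_resonance M s -> ~~ odd (size s) /\ trivial_resonance s.
Proof.
case=> size_s nz_s _ _ moments.
have sym x : count_mem x s = count_mem (- x) s.
  have [->|x0] := eqVneq x 0; first by rewrite oppr0.
  apply: count_mem_opp_lam_weight x0 _.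
  exact: sum_fiber_eq0 (resonance_moments_eq0 moments) size_s _.
have pairs := perm_eq_opp_pairs nz_s sym.
split; last by exists [seq y <- s | 0 < y].
by rewrite (perm_size pairs) size_opp_pairs odd_double.
Qed.
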